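(* Let $X$ be a finite-dimensional real Banach space such that each $x\in S_X$ is $\varepsilon_x$-smooth for some $\varepsilon_x\in[0,2)$ (depending on $x$). Then $X$ is approximately smooth, i.e. there exists $\varepsilon\in[0,2)$ such that every $x\in S_X$ is $\varepsilon$-smooth.
   Context: For $x\in X\setminus\{\theta\}$, $J(x)=\{f\in S_{X^*}: f(x)=\|x\|\}$ (supporting functionals), and $x$ is $\varepsilon$-smooth if $\operatorname{diam}J(x)=\sup_{f,g\in J(x)}\|f-g\|\le\varepsilon$. $S_X$ is the unit sphere of $X$. *)

From HB Require Import structures.
From mathcomp Require Import all_boot all_order all_algebra.
From mathcomp Require Import all_classical all_reals topology normedtype.
Set Implicit Arguments. Unset Strict Implicit. Unset Printing Implicit Defensive.
Import Order.TTheory GRing.Theory Num.Theory.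
Import numFieldNormedType.Exports.
Local Open Scope classical_set_scope.
Local Open Scope ring_scope.

Section Defs.
Context {R : realType} {V : normedModType R}.

Definition lin_fun (f : V -> R) : Prop :=
  forall (a : R) (x y : V), f (a *: x + y) = a * f x + f y.

Definition dual_elt (f : V -> R) : Prop := lin_fun f /\ continuous f.

Definition dnorm (f : V -> R) : R :=
  sup [set `|f x| | x in [set x : V | `|x| <= 1]].

Definition supp_fun (x : V) : set (V -> R) :=
  [set f | dual_elt f /\ dnorm f = 1 /\ f x = `|x|].

Definition eps_smooth (eps : R) (x : V) : Prop :=
  forall f g, supp_fun x f -> supp_fun x g -> dnorm (f \- g) <= eps.

Definition finite_dim : Prop :=
  exists (n : nat) (phi : V -> 'rV[R]_n),
    (forall (a : R) (x y : V), phi (a *: x + y) = a *: phi x + phi y)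
    /\ bijective phi.
End Defs.
Arguments finite_dim R V : clear implicits.

From HB Require Import structures.
From mathcomp Require Import all_boot all_order all_algebra.
From mathcomp Require Import all_classical all_reals topology normedtype.
From mathcomp Require Import derive lra.
Set Implicit Arguments. Unset Strict Implicit. Unset Printing Implicit Defensive.
Import Order.TTheory GRing.Theory Num.Theory.
Import numFieldNormedType.Exports.
Local Open Scope classical_set_scope.
Local Open Scope ring_scope.

(* Fix a linear isomorphism [psi : R^n -> X] with inverse [phi].  A supporting
   functional [f] is determined by its coordinate row [a = (f (psi e_i))_i], and
   these rows range over the compact set of [a] with [|<w, a>| <= ||psi w||]
   for all [w].  So the quadruples [(u, w, a, b)] with [||psi u|| = 1],
   [||psi w|| <= 1], [a], [b] in that set and [<u, a> = <u, b> = 1] form a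
   compact set, on which the continuous gap [<w, a> - <w, b>] attains a maximum
   [M] at some [(u, w, a, b)].  Then [M <= diam J(psi u) < 2], while
   [diam J(x) <= M] for every [x] in [S_X]. *)

Lemma lipschitz_continuous (R : realType) (U W : normedModType R) (f : U -> W) k :
  0 < k -> (forall x y, `|f x - f y| <= k * `|x - y|) -> continuous f.
Proof.
move=> k0 fk x; apply/cvgrPdist_lt => e e0; near=> y.
rewrite (le_lt_trans (fk _ _)) // -ltr_pdivlMl // mulrC; near: y.
by apply: cvgr_dist_lt; [exact: cvg_id | rewrite divr_gt0].
Unshelve. all: by end_near.
Qed.

Lemma continuous_sum (K : numFieldType) (T : topologicalType)
    (I : Type) (s : seq I) (F : I -> T -> K) :
  (forall i, continuous (F i)) -> continuous (fun x => \sum_(i <- s) F i x).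
Proof.
move=> Fc; elim: s => [|i s IHs] x.
  under eq_fun do rewrite big_nil; exact: cst_continuous.
under eq_fun do rewrite big_cons; exact: cvgD (Fc i x) (IHs x).
Qed.

Section DualNorm.
Context (R : realType) (V : normedModType R).

Lemma lin_fun_scalar (f : V -> R) : lin_fun f -> {g : {scalar V} | f = g}.
Proof.
by move=> lf; exists (HB.pack_for {scalar V} f (GRing.isLinear.Build R V R *%R f lf)).
Qed.

Lemma dnorm_le (f : V -> R) k :
  (forall v, `|v| <= 1 -> `|f v| <= k) -> dnorm f <= k.
Proof.
move=> fk; apply: ge_sup; first by exists `|f 0|, 0 => //=; rewrite normr0.
by move=> _ [v /fk fvk <-].
Qed.

Lemma le_dnorm (f : V -> R) k v :
  (forall u, `|u| <= 1 -> `|f u| <= k) -> `|v| <= 1 -> `|f v| <= dnorm f.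
Proof.
move=> fk v1; apply: sup_upper_bound; last by exists v.
split; first by exists `|f 0|, 0 => //=; rewrite normr0.
by exists k => _ [u /fk fuk <-].
Qed.

Lemma dnorm1_le (f : V -> R) v : lin_fun f -> dnorm f = 1 -> `|f v| <= `|v|.
Proof.
move=> /lin_fun_scalar [{}f ->] f1.
have f_ball u : `|u| <= 1 -> `|f u| <= 1.
  move=> u1; rewrite -f1; apply: sup_upper_bound; last by exists u.
  by apply: contrapT => /sup_out; rewrite -/(dnorm f) f1 => /eqP; rewrite oner_eq0.
have [->|v0] := eqVneq v 0; first by rewrite linear0 !normr0.
have v_gt0 : 0 < `|v| by rewrite normr_gt0.
have := f_ball (`|v|^-1 *: v).
rewrite linearZ /= normrZ normrM normfV normr_id mulVf ?gt_eqF // lexx => /(_ isT).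
by rewrite ler_pdivrMl // mulr1.
Qed.

End DualNorm.

Section RowVectors.
Context (R : realType) (n : nat).

Lemma rV_coord_le (w : 'rV[R]_n) j : `|w 0 j| <= `|w|.
Proof.
by rewrite [leRHS]/Num.norm /= mx_normrE; apply/bigmax_geP; right; exists (0, j).
Qed.

Lemma rV_norm_le (w : 'rV[R]_n) k : 0 <= k -> (forall j, `|w 0 j| <= k) -> `|w| <= k.
Proof.
move=> k0 wk; rewrite [leLHS]/Num.norm /= mx_normrE; apply/bigmax_leP.
by split => // -[i j] _ /=; rewrite (ord1 i).
Qed.

Definition rV_dot (w a : 'rV[R]_n) : R := \sum_i w 0 i * a 0 i.

Lemma rV_dotPl s w w' a : rV_dot (s *: w + w') a = s * rV_dot w a + rV_dot w' a.
Proof.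
rewrite /rV_dot mulr_sumr -big_split /=; apply: eq_bigr => i _.
by rewrite !mxE mulrDl mulrA.
Qed.

Lemma rV_dot_delta j a : rV_dot 'e_j a = a 0 j.
Proof.
rewrite /rV_dot (bigD1 j) //= big1 ?addr0; first by rewrite mxE !eqxx mul1r.
by move=> i ij; rewrite mxE (negbTE ij) andbF mul0r.
Qed.

Lemma continuous_rV_dot (T : topologicalType) (s t : T -> 'rV[R]_n) :
  continuous s -> continuous t -> continuous (fun p => rV_dot (s p) (t p)).
Proof.
move=> sc tc; apply: (@continuous_sum _ _ _ _ (fun i p => s p 0 i * t p 0 i)) => i p.
apply: (@continuousM _ _ (fun p => s p 0 i) (fun p => t p 0 i)).
  exact: (continuous_comp (sc p) (@coord_continuous R 1 n 0 i _)).
exact: (continuous_comp (tc p) (@coord_continuous R 1 n 0 i _)).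
Qed.

End RowVectors.

Section RowLinear.
Context (R : realType) (n : nat) (W : normedModType R).
Variable f : {linear 'rV[R]_n -> W}.

Lemma rV_linear_bounded : exists2 C, 0 < C & forall w, `|f w| <= C * `|w|.
Proof.
exists (1 + \sum_i `|f 'e_i|); first by rewrite ltr_pwDl // sumr_ge0.
move=> w; rewrite {1}(row_sum_delta w) linear_sum.
apply: le_trans (ler_norm_sum _ _ _) _.
apply: (@le_trans _ _ (\sum_i `|w| * `|f 'e_i|)).
  by apply: ler_sum => i _; rewrite linearZ normrZ ler_wpM2r // rV_coord_le.
by rewrite -mulr_sumr mulrC ler_wpM2r // lerDr.
Qed.

Lemma rV_linear_continuous : continuous f.
Proof.
have [C C0 fC] := rV_linear_bounded.
apply: (@lipschitz_continuous _ _ _ f C C0) => x y.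
by rewrite -linearB fC.
Qed.

Lemma rV_linear_norm_continuous : continuous (fun w => `|f w|).
Proof.
move=> w; apply: continuous_comp; first exact: rV_linear_continuous.
exact: norm_continuous.
Qed.

Lemma rV_linear_injective_lb :
  injective f -> exists2 c, 0 < c & forall w, c * `|w| <= `|f w|.
Proof.
move=> finj; set S := [set w : 'rV[R]_n | `|w| = 1].
have normalize w : w != 0 -> S (`|w|^-1 *: w).
  by move=> w0; rewrite /S /= normrZ normfV normr_id mulVf // normr_eq0.
have [S0|S0] := pselect (S !=set0); last first.
  exists 1 => // w; have [->|w0] := eqVneq w 0; first by rewrite normr0 mulr0.
  by exfalso; apply: S0; exists (`|w|^-1 *: w); exact: normalize.
have bS : bounded_set S.
  by rewrite /= /bounded_near; near=> M => w /= ->; near: M; exact: nbhs_pinfty_ge.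
have cS : compact S.
  apply: bounded_closed_compact bS _.
  exact: (continuous_closedP _).1 (@norm_continuous R 'rV[R]_n) _ (@closed_eq R 1).
have [u /set_mem Su umin] :=
  compact_EVT_min S0 cS (continuous_subspaceT rV_linear_norm_continuous).
have fu_gt0 : 0 < `|f u|.
  rewrite normr_gt0; apply/eqP => fu0.
  have u0 : u = 0 by apply: finj; rewrite fu0 linear0.
  by move: Su; rewrite /S /= u0 normr0 => /esym/eqP; rewrite oner_eq0.
exists `|f u| => // w; have [->|w0] := eqVneq w 0; first by rewrite normr0 mulr0.
have := umin _ (mem_set (normalize _ w0)); rewrite linearZ normrZ normfV normr_id.
by rewrite ler_pdivlMl ?normr_gt0 // mulrC.
Unshelve. all: by end_near.
Qed.

Lemma compact_rV_linear_ball r :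
  injective f -> compact [set w | `|f w| <= r].
Proof.
move=> /rV_linear_injective_lb [c c0 fc].
have bB : bounded_set [set w | `|f w| <= r].
  rewrite /= /bounded_near; near=> M => w /= fw; apply: (@le_trans _ _ (r / c)).
    by rewrite ler_pdivlMr // mulrC (le_trans (fc w)).
  by near: M; apply: nbhs_pinfty_ge; exact: num_real.
apply: bounded_closed_compact bB _.
exact: (continuous_closedP _).1 rV_linear_norm_continuous _ (@closed_le R r).
Unshelve. all: by end_near.
Qed.

End RowLinear.

Section Coordinates.
Context (R : realType) (V : normedModType R) (n : nat).
Variables (phi : {linear V -> 'rV[R]_n}) (psi : {linear 'rV[R]_n -> V}).
Hypotheses (phiK : cancel phi psi) (psiK : cancel psi phi).

Definition functional_of (a : 'rV[R]_n) : V -> R := fun v => rV_dot (phi v) a.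

Definition coords_of (f : V -> R) : 'rV[R]_n := \row_i f (psi 'e_i).

Lemma functional_of_lin a : lin_fun (functional_of a).
Proof. by move=> s x y; rewrite /functional_of linearP rV_dotPl. Qed.

Lemma coords_ofK f : lin_fun f -> functional_of (coords_of f) =1 f.
Proof.
move=> /lin_fun_scalar [{}f ->] v; rewrite -[in RHS](phiK v).
rewrite [in RHS](row_sum_delta (phi v)) !linear_sum; apply: eq_bigr => i _.
by rewrite !linearZ mxE.
Qed.

Definition dual_ball : set 'rV[R]_n :=
  [set a | forall w, `|rV_dot w a| <= `|psi w|].

Lemma functional_of_le a v : dual_ball a -> `|functional_of a v| <= `|v|.
Proof. by move=> /(_ (phi v)); rewrite phiK. Qed.

Lemma coords_of_dual_ball f : lin_fun f -> dnorm f = 1 -> dual_ball (coords_of f).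
Proof.
move=> lf f1 w; have := coords_ofK lf (psi w); rewrite /functional_of psiK => ->.
exact: dnorm1_le.
Qed.

Lemma bounded_dual_ball : bounded_set dual_ball.
Proof.
have [C C0 psiC] := rV_linear_bounded psi.
rewrite /= /bounded_near; near=> M => a /= aD; apply: (@le_trans _ _ C).
  apply: rV_norm_le (ltW C0) _ => j; rewrite -rV_dot_delta.
  apply: le_trans (aD _) (le_trans (psiC _) _).
  rewrite -[leRHS]mulr1 ler_wpM2l ?(ltW C0) //.
  by apply: rV_norm_le => // k; rewrite mxE; case: (_ && _); rewrite ?normr1 ?normr0.
by near: M; apply: nbhs_pinfty_ge; exact: num_real.
Unshelve. all: by end_near.
Qed.

Lemma closed_dual_ball : closed dual_ball.
Proof.
have -> : dual_ball = \bigcap_w [set a | `|rV_dot w a| <= `|psi w|].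
  by apply/seteqP; split => [a aD w _|a aD w]; [exact: aD | exact: aD w Logic.I].
apply: closed_bigI => w _; apply: (continuous_closedP _).1 _ _ (@closed_le R _).
move=> a; apply: continuous_comp _ (@norm_continuous _ _ _).
have := @continuous_rV_dot _ _ _ (fun=> w) id (@cst_continuous _ _ w) (fun b => cvg_id).
exact.
Qed.

Lemma compact_dual_ball : compact dual_ball.
Proof. exact: bounded_closed_compact bounded_dual_ball closed_dual_ball. Qed.

End Coordinates.

Section SmoothData.
Context (R : realType) (V : normedModType R) (n : nat).
Variables (phi : {linear V -> 'rV[R]_n}) (psi : {linear 'rV[R]_n -> V}).
Hypotheses (phiK : cancel phi psi) (psiK : cancel psi phi).

Local Notation rV := 'rV[R]_n.
Local Notation quad := ((rV * rV) * (rV * rV))%type.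
Local Notation dual_ball := (dual_ball psi).
Local Notation functional_of := (functional_of phi).
Local Notation coords_of := (coords_of psi).

Lemma supp_fun_functional_of u a :
  `|psi u| = 1 -> dual_ball a -> rV_dot u a = 1 ->
  supp_fun (psi u) (functional_of a).
Proof.
move=> u1 aD ua; have fu : functional_of a (psi u) = 1 by rewrite /functional_of psiK.
have fa_le v : `|functional_of a v| <= `|v| := functional_of_le phiK v aD.
have fa_ball v : `|v| <= 1 -> `|functional_of a v| <= 1 by move/(le_trans (fa_le v)).
split; [split; first exact: functional_of_lin|split].
- have [g gE] := lin_fun_scalar (functional_of_lin phi a).
  apply: (@lipschitz_continuous _ _ _ _ 1) => // x y.
  by rewrite mul1r gE -linearB -gE.
- apply/le_anti; rewrite dnorm_le //= -[X in X <= _]normr1 -fu.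
  by apply: le_dnorm fa_ball _; rewrite u1.
- by rewrite fu u1.
Qed.

Definition smooth_data : set quad :=
  ([set w | `|psi w| <= 1] `*` [set w | `|psi w| <= 1]) `*`
    (dual_ball `*` dual_ball)
  `&` [set p | `|psi p.1.1| = 1] `&` [set p | rV_dot p.1.1 p.2.1 = 1]
  `&` [set p | rV_dot p.1.1 p.2.2 = 1].

Definition gap (p : quad) : R := rV_dot p.1.2 p.2.1 - rV_dot p.1.2 p.2.2.

Let continuous11 : continuous (fun p : quad => p.1.1).
Proof. by move=> p; apply: continuous_comp; [exact: cvg_fst | exact: cvg_fst]. Qed.

Let continuous12 : continuous (fun p : quad => p.1.2).
Proof. by move=> p; apply: continuous_comp; [exact: cvg_fst | exact: cvg_snd]. Qed.

Let continuous21 : continuous (fun p : quad => p.2.1).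
Proof. by move=> p; apply: continuous_comp; [exact: cvg_snd | exact: cvg_fst]. Qed.

Let continuous22 : continuous (fun p : quad => p.2.2).
Proof. by move=> p; apply: continuous_comp; [exact: cvg_snd | exact: cvg_snd]. Qed.

Lemma compact_smooth_data : compact smooth_data.
Proof.
have psi_inj : injective psi := can_inj psiK.
have cB := compact_rV_linear_ball (r := 1) psi_inj.
have cD := compact_dual_ball (psi := psi).
have closed_eq1 (f : quad -> R) :
    continuous f -> closed [set p | f p = 1].
  by move=> fc; exact: (continuous_closedP f).1 fc _ (@closed_eq R 1).
apply: (compact_closedI (compact_closedI (compact_closedI _ _) _) _).
- exact: compact_setX (compact_setX cB cB) (compact_setX cD cD).
- apply: closed_eq1 => p.
  have := continuous_comp (@continuous11 p)
    (@rV_linear_norm_continuous _ _ _ psi p.1.1).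
  exact.
- exact: closed_eq1 (continuous_rV_dot continuous11 continuous21).
- exact: closed_eq1 (continuous_rV_dot continuous11 continuous22).
Qed.

Lemma continuous_gap : continuous gap.
Proof.
move=> p; apply: cvgB.
  exact: continuous_rV_dot continuous12 continuous21 p.
exact: continuous_rV_dot continuous12 continuous22 p.
Qed.

Lemma smooth_data_of_supp x y f g :
  `|x| = 1 -> `|y| <= 1 -> supp_fun x f -> supp_fun x g ->
  smooth_data ((phi x, phi y), (coords_of f, coords_of g)).
Proof.
move=> x1 y1 [[lf _] [f1 fx]] [[lg _] [g1 gx]].
have coords_dot h : lin_fun h -> h x = `|x| -> rV_dot (phi x) (coords_of h) = 1.
  by move=> lh hx; have := coords_ofK phiK lh x; rewrite /functional_of hx x1.
split; [split; [split|]|] => /=; rewrite ?phiK ?x1 //.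
- by split; split => //=; rewrite ?phiK ?x1 //; exact: coords_of_dual_ball.
- exact: coords_dot.
- exact: coords_dot.
Qed.

Lemma gap_of_supp x y f g : lin_fun f -> lin_fun g ->
  gap ((phi x, phi y), (coords_of f, coords_of g)) = f y - g y.
Proof. by move=> lf lg; rewrite /gap /= -!/(functional_of _ _) !coords_ofK. Qed.

Lemma gap_le_eps_smooth p e :
  smooth_data p -> eps_smooth e (psi p.1.1) -> gap p <= e.
Proof.
move=> [[[[[_ w1] [aD bD]] u1] ua] ub] he.
have := he _ _ (supp_fun_functional_of u1 aD ua) (supp_fun_functional_of u1 bD ub).
apply: le_trans.
have -> : gap p = (functional_of p.2.1 \- functional_of p.2.2) (psi p.1.2).
  by rewrite /gap /functional_of /= psiK.
apply: le_trans (ler_norm _) _; apply: (@le_dnorm _ _ _ 2) w1 => v v1 /=.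
have := functional_of_le phiK v aD; have := functional_of_le phiK v bD.
have := ler_normB (functional_of p.2.1 v) (functional_of p.2.2 v); lra.
Qed.

Lemma eps_smooth_of_gap_ub M :
  (forall p, smooth_data p -> gap p <= M) ->
  forall x : V, `|x| = 1 -> eps_smooth M x.
Proof.
move=> gapM x x1 f g sf sg; apply: dnorm_le => y y1 /=.
have [[lf _] [[lg _] _]] := (sf.1, sg).
have gap_le z : `|z| <= 1 -> f z - g z <= M.
  by move=> z1; rewrite -(gap_of_supp x z lf lg); apply/gapM/smooth_data_of_supp.
have := gap_le (- y); rewrite normrN => /(_ y1).
have [f' fE] := lin_fun_scalar lf; have [g' gE] := lin_fun_scalar lg; subst f g.
by rewrite !linearN ler_norml -opprD lerNl => -> /=; exact: gap_le.
Qed.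

Lemma gap_ub_lt2 :
  (forall x : V, `|x| = 1 -> exists eps : R, 0 <= eps < 2 /\ eps_smooth eps x) ->
  exists2 M, M < 2 & forall p, smooth_data p -> gap p <= M.
Proof.
move=> smooth; have [K0|K0] := pselect (smooth_data !=set0); last first.
  by exists 0 => // p Kp; exfalso; apply: K0; exists p.
have [p /set_mem Kp pmax] :=
  compact_EVT_max K0 compact_smooth_data (continuous_subspaceT continuous_gap).
have [[_ u1] _] := Kp.1.
have [e [/andP[_ e2] he]] := smooth _ u1.
exists (gap p); first exact: le_lt_trans (gap_le_eps_smooth Kp he) e2.
by move=> q Kq; apply/pmax/mem_set.
Qed.

End SmoothData.

Theorem theorem2p6 (R : realType) (V : normedModType R) :
  finite_dim R V ->
  (forall x : V, `|x| = 1 ->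
     exists eps : R, 0 <= eps < 2 /\ eps_smooth eps x) ->
  exists eps : R, 0 <= eps < 2 /\
    (forall x : V, `|x| = 1 -> eps_smooth eps x).
Proof.
move=> [n [phi0 [phi0_lin [psi0 phiK psiK]]]] smooth.
pose phi := HB.pack_for {linear V -> 'rV[R]_n} phi0
  (GRing.isLinear.Build R V _ *:%R phi0 phi0_lin).
pose psi := HB.pack_for {linear 'rV[R]_n -> V} psi0
  (GRing.isLinear.Build R _ V *:%R psi0 (can2_linear (f := phi) phiK psiK)).
have [M M2 gapM] := gap_ub_lt2 (phi := phi) (psi := psi) phiK psiK smooth.
exists (Num.max 0 M); split; first by rewrite le_max lexx /= gt_max M2 andbT.
apply: (eps_smooth_of_gap_ub (phi := phi) (psi := psi) phiK psiK) => p Kp.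
by rewrite le_max gapM ?orbT.
Qed.
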